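(* Let $a\in\mathbb{C}$ with $2a$, $a$, $a+\tfrac12$, $a+1$ not nonpositive integers. Then for every integer $n\ge0$ and every $x\in\mathbb{C}$: $${}_2F_1\!\left(\begin{matrix}-2n,\,a+ix\\ 2a\end{matrix};2\right)={}_3F_2\!\left(\begin{matrix}-n,\,a+ix,\,a-ix\\ a+\frac12,\,a\end{matrix};1\right),\qquad {}_2F_1\!\left(\begin{matrix}-2n-1,\,a+ix\\ 2a\end{matrix};2\right)=\frac{x}{ia}\,{}_3F_2\!\left(\begin{matrix}-n,\,a+ix,\,a-ix\\ a+\frac12,\,a+1\end{matrix};1\right).$$ (That is, for Meixner-Pollaczek and continuous dual Hahn polynomials, $\frac{P_{2n}^{(a)}(x;\frac\pi2)}{P_{2n}^{(a)}(ia;\frac\pi2)}=\frac{S_n(x^2;a,\frac12,0)}{S_n(-a^2;a,\frac12,0)}$ and $\frac{P_{2n+1}^{(a)}(x;\frac\pi2)}{P_{2n+1}^{(a)}(ia;\frac\pi2)}=\frac{x\,S_n(x^2;a,\frac12,1)}{ia\,S_n(-a^2;a,\frac12,1)}$.)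
   Context: ${}_rF_s$ is the generalized hypergeometric series $\sum_k\frac{(a_1)_k\cdots(a_r)_k}{(b_1)_k\cdots(b_s)_k\,k!}z^k$, $(c)_k=c(c+1)\cdots(c+k-1)$; all series terminate. Meixner-Pollaczek: $P_n^{(\lambda)}(x;\phi)/P_n^{(\lambda)}(i\lambda;\phi)={}_2F_1(-n,\lambda+ix;2\lambda;1-e^{-2i\phi})$. Continuous dual Hahn: $S_n(x^2;a,b,c)/S_n(-a^2;a,b,c)={}_3F_2(-n,a+ix,a-ix;a+b,a+c;1)$. *)

(* Complex numbers: an arbitrary numClosedFieldType C
   (algebraically closed field with conjugation and 'i, e.g. algC). *)
From HB Require Import structures.
From mathcomp Require Import all_boot all_order all_algebra.
Set Implicit Arguments. Unset Strict Implicit. Unset Printing Implicit Defensive.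
Import Order.TTheory GRing.Theory Num.Theory.
Local Open Scope ring_scope.

Definition poch {R : nzRingType} (c : R) (k : nat) : R :=
  \prod_(j < k) (c + j%:R).

Definition not_nonpos_int {R : nzRingType} (c : R) : Prop :=
  forall k : nat, c != - (k%:R).

(* Terminating 2F1(-m, b; c; z): the series terminates at k = m since
   (-m)_k = 0 for k > m. *)
Definition F21_term {F : fieldType} (m : nat) (b c z : F) : F :=
  \sum_(k < m.+1)
     poch (- (m%:R) : F) k * poch b k / (poch c k * (k`!)%:R) * z ^+ k.

Definition F32_term {F : fieldType} (m : nat) (b1 b2 c1 c2 z : F) : F :=
  \sum_(k < m.+1)
     poch (- (m%:R) : F) k * poch b1 k * poch b2 k
       / (poch c1 k * poch c2 k * (k`!)%:R) * z ^+ k.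

From HB Require Import structures.
From mathcomp Require Import all_boot all_order all_algebra.
From mathcomp Require Import ring.
Set Implicit Arguments.
Unset Strict Implicit.
Unset Printing Implicit Defensive.

Import Order.TTheory GRing.Theory Num.Theory.
Local Open Scope ring_scope.

(* Write each terminating series as a binomial transform
   [binsum m t = \sum_k 'C(m, k) t_k] of its reduced terms.  An index shift
   and a comparison of the coefficients of each [t_k] turn the term ratio
   into recurrences in [m]: for [f_m = 2F1(-m, a + ix; 2a; 2)] the
   Meixner-Pollaczek recurrence at phi = pi/2,
   [(2a + m + 1) f_(m+2) = -2ix f_(m+1) + (m + 1) f_m], and for the two
   continuous dual Hahn series [g_n] (lower parameters [a + 1/2, a]) and
   [h_n] (lower parameters [a + 1/2, a + 1]) a pair of contiguous relations.
   The latter say exactly that [g_n] and [-(ix/a) h_n] propagate like the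
   even and odd terms of [f]; as the initial values agree, induction on [n]
   concludes. *)

Section BinomialSums.
Variable R : nzSemiRingType.

Lemma mulr_bin_split n j :
  n%:R * 'C(n, j)%:R = j.+1%:R * 'C(n, j.+1)%:R + j%:R * 'C(n, j)%:R :> R.
Proof.
rewrite -!natrM -natrD mul_bin_left; congr _%:R.
case: (leqP j n) => [le_jn | lt_nj]; first by rewrite -mulnDl subnK.
by rewrite bin_small // !muln0.
Qed.

Lemma mulr_bin_succ n k :
  n.+1%:R * 'C(n.+1, k)%:R = k%:R * 'C(n.+1, k)%:R + n.+1%:R * 'C(n, k)%:R :> R.
Proof. by rewrite mulr_bin_split -!natrM -(mul_bin_diag n.+1) addrC. Qed.

Definition binsum (m : nat) (t : nat -> R) : R :=
  \sum_(k < m.+1) 'C(m, k)%:R * t k.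

Lemma binsum0 t : binsum 0 t = t 0%N.
Proof. by rewrite /binsum big_ord1 bin0 mul1r. Qed.

Lemma binsum1 t : binsum 1 t = t 0%N + t 1%N.
Proof. by rewrite /binsum !big_ord_recr big_ord0 /= bin0 binn !mul1r add0r. Qed.

Lemma binsum_widen m N t : (m <= N)%N ->
  binsum m t = \sum_(k < N.+1) 'C(m, k)%:R * t k.
Proof.
move=> le_mN; rewrite -(subnKC (le_mN : m < N.+1)%N) big_split_ord /=.
rewrite [X in _ + X]big1 ?addr0 // => i _.
by rewrite bin_small ?mul0r // ltnS leq_addr.
Qed.

Lemma sum_ord_shift N (v u : nat -> R) : v N = 0 ->
  \sum_(k < N.+1) v k * u k.+1
  = \sum_(k < N.+1) (if (k : nat) is j.+1 then v j else 0) * u k.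
Proof.
move=> vN0; rewrite big_ord_recr /= vN0 mul0r addr0.
by rewrite [RHS]big_ord_recl /= mul0r add0r.
Qed.

End BinomialSums.

Arguments mulr_bin_split {R} n j.
Arguments mulr_bin_succ {R} n k.

Section BinomialSumRecurrences.
Variable R : comNzRingType.
Implicit Types (b c q : R) (s r t : nat -> R).

Lemma binsum_three_term_rec b c t :
  (forall k, (c + k%:R) * t k.+1 = - (2%:R * (b + k%:R)) * t k) ->
  forall m, (c + m.+1%:R) * binsum m.+2 t
            = (c - 2%:R * b) * binsum m.+1 t + m.+1%:R * binsum m t.
Proof.
move=> t_ratio m.
rewrite (binsum_widen t (leqnSn m.+1)) (binsum_widen t (leqW (leqnSn m))).
have split_rhs : (c - 2%:R * b) * (\sum_(k < m.+3) 'C(m.+1, k)%:R * t k)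
    = \sum_(k < m.+3) 'C(m.+1, k)%:R * (c + 2%:R * k%:R) * t k
    + \sum_(k < m.+3) 'C(m.+1, k)%:R * (c + k%:R) * t k.+1.
  rewrite mulr_sumr -big_split /=; apply: eq_bigr => k _.
  rewrite -[_ * (c + k%:R) * _]mulrA t_ratio; ring.
have shift : \sum_(k < m.+3) 'C(m.+1, k)%:R * (c + k%:R) * t k.+1
    = \sum_(k < m.+3) (if (k : nat) is j.+1 then 'C(m.+1, j)%:R * (c + j%:R) else 0) * t k.
  by apply: sum_ord_shift; rewrite bin_small ?mul0r.
rewrite split_rhs shift /binsum !mulr_sumr -!big_split /=.
apply: eq_bigr => [[[|j] lt_j]] _ /=; first by rewrite !bin0; ring.
have coef : (c + m.+1%:R) * 'C(m.+2, j.+1)%:R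
    = 'C(m.+1, j.+1)%:R * (c + 2%:R * j.+1%:R) + 'C(m.+1, j)%:R * (c + j%:R)
      + m.+1%:R * 'C(m, j.+1)%:R.
  rewrite [in LHS]binS natrD mulrDl [m.+1%:R * _]mulrDr.
  rewrite (mulr_bin_succ m j.+1) (mulr_bin_split m.+1 j); ring.
by rewrite [LHS]mulrA coef; ring.
Qed.

Lemma binsum_succ_rel_even c q s r :
  (forall j, q * r j = 2%:R * (c + j%:R) * s j + (2%:R * (c + j%:R) + 1) * s j.+1) ->
  forall n, (2%:R * (c + n%:R) + 1) * binsum n.+1 s
            = q * binsum n r + (2 * n).+1%:R * binsum n s.
Proof.
move=> rs_rel n.
rewrite (binsum_widen r (leqnSn n)) (binsum_widen s (leqnSn n)).
have split_q : q * (\sum_(k < n.+2) 'C(n, k)%:R * r k)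
    = \sum_(k < n.+2) 'C(n, k)%:R * (2%:R * (c + k%:R)) * s k
    + \sum_(k < n.+2) 'C(n, k)%:R * (2%:R * (c + k%:R) + 1) * s k.+1.
  rewrite mulr_sumr -big_split /=; apply: eq_bigr => k _.
  by rewrite mulrCA rs_rel; ring.
have shift : \sum_(k < n.+2) 'C(n, k)%:R * (2%:R * (c + k%:R) + 1) * s k.+1
    = \sum_(k < n.+2)
        (if (k : nat) is j.+1 then 'C(n, j)%:R * (2%:R * (c + j%:R) + 1) else 0) * s k.
  by apply: sum_ord_shift; rewrite bin_small ?mul0r.
rewrite split_q shift /binsum !mulr_sumr -!big_split /=.
apply: eq_bigr => [[[|j] lt_j]] _ /=; first by rewrite !bin0; ring.
have coef : (2%:R * (c + n%:R) + 1) * 'C(n.+1, j.+1)%:R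
    = 'C(n, j.+1)%:R * (2%:R * (c + j.+1%:R)) + 'C(n, j)%:R * (2%:R * (c + j%:R) + 1)
      + (2 * n).+1%:R * 'C(n, j.+1)%:R.
  rewrite [in LHS]binS natrD; apply/eqP; rewrite -subr_eq0; apply/eqP.
  transitivity (2%:R * (n%:R * 'C(n, j)%:R
                        - (j.+1%:R * 'C(n, j.+1)%:R + j%:R * 'C(n, j)%:R)) : R); first ring.
  by rewrite -mulr_bin_split subrr mulr0.
by rewrite [LHS]mulrA coef; ring.
Qed.

Lemma binsum_succ_rel_odd c s r :
  (forall j, r j * (c + j%:R) = c * s j) ->
  forall n, (c + n.+1%:R) * binsum n.+1 r = c * binsum n.+1 s + n.+1%:R * binsum n r.
Proof.
move=> rs_rel n; rewrite (binsum_widen r (leqnSn n)) /binsum !mulr_sumr -big_split /=.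
apply: eq_bigr => k _.
rewrite [c * _]mulrCA -rs_rel [LHS]mulrA mulrDl (mulr_bin_succ n k); ring.
Qed.

End BinomialSumRecurrences.

Lemma poch0 (R : nzRingType) (c : R) : poch c 0 = 1.
Proof. by rewrite /poch big_ord0. Qed.

Lemma poch_recr (R : nzRingType) (c : R) k : poch c k.+1 = poch c k * (c + k%:R).
Proof. by rewrite /poch big_ord_recr. Qed.

Lemma poch_recl (R : nzRingType) (c : R) k : poch c k.+1 = c * poch (c + 1) k.
Proof.
rewrite /poch big_ord_recl /= addr0; congr (_ * _).
by apply: eq_bigr => i _; rewrite /= -addrA -nat1r.
Qed.

Lemma not_nonpos_int_addn (R : nzRingType) (c : R) k :
  not_nonpos_int c -> c + k%:R != 0.
Proof. by move=> c_ok; rewrite addr_eq0 c_ok. Qed.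

Lemma not_nonpos_int_neq0 (R : nzRingType) (c : R) : not_nonpos_int c -> c != 0.
Proof. by move/(_ 0%N); rewrite oppr0. Qed.

Lemma poch_neq0 (R : idomainType) (c : R) k : not_nonpos_int c -> poch c k != 0.
Proof.
move=> c_ok; elim: k => [|k IH]; first by rewrite poch0 oner_eq0.
by rewrite poch_recr mulf_neq0 // not_nonpos_int_addn.
Qed.

Lemma poch_oppn (R : comNzRingType) m k :
  poch (- m%:R : R) k = (-1) ^+ k * ('C(m, k) * k`!)%:R.
Proof.
rewrite bin_ffact; elim: k => [|k IH]; first by rewrite poch0 expr0 ffactn0 mul1r.
rewrite poch_recr IH ffactnSr exprS natrM.
have [le_km | lt_mk] := leqP k m; first by rewrite natrB //; ring.
by rewrite ffact_small //; ring.
Qed.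

Lemma natr_fact_neq0 (R : numDomainType) k : k`!%:R != 0 :> R.
Proof. by rewrite pnatr_eq0 -lt0n fact_gt0. Qed.

Section HypergeometricCoefficients.
Variable F : numFieldType.
Implicit Types (a b c w z : F).

Definition F21_coef b c z k := (- z) ^+ k * poch b k / poch c k.

Definition F32_coef b1 b2 c1 c2 z k :=
  (- z) ^+ k * poch b1 k * poch b2 k / (poch c1 k * poch c2 k).

Lemma F21_termE m b c z :
  not_nonpos_int c -> F21_term m b c z = binsum m (F21_coef b c z).
Proof.
move=> c_ok; apply: eq_bigr => k _; rewrite /F21_coef poch_oppn natrM [(- z) ^+ _]exprNn.
by field; rewrite natr_fact_neq0 poch_neq0.
Qed.

Lemma F32_termE m b1 b2 c1 c2 z :
  not_nonpos_int c1 -> not_nonpos_int c2 ->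
  F32_term m b1 b2 c1 c2 z = binsum m (F32_coef b1 b2 c1 c2 z).
Proof.
move=> c1_ok c2_ok; apply: eq_bigr => k _; rewrite /F32_coef poch_oppn natrM [(- z) ^+ _]exprNn.
by field; rewrite natr_fact_neq0 !poch_neq0.
Qed.

Lemma F21_coef_ratio b c z k : not_nonpos_int c ->
  (c + k%:R) * F21_coef b c z k.+1 = - (z * (b + k%:R)) * F21_coef b c z k.
Proof.
move=> c_ok; rewrite /F21_coef !poch_recr exprS.
by field; rewrite poch_neq0 // not_nonpos_int_addn.
Qed.

Lemma F32_coef_lower_succ b1 b2 c1 c z k :
  not_nonpos_int c1 -> not_nonpos_int c ->
  F32_coef b1 b2 c1 (c + 1) z k * (c + k%:R) = c * F32_coef b1 b2 c1 c z k.
Proof.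
move=> c1_ok c_ok.
have shift : poch (c + 1) k = poch c k * (c + k%:R) / c.
  by rewrite -poch_recr poch_recl; field; rewrite not_nonpos_int_neq0.
rewrite /F32_coef shift.
by field; rewrite !poch_neq0 ?not_nonpos_int_addn ?not_nonpos_int_neq0.
Qed.

Lemma F32_coef_contiguous a w j :
  not_nonpos_int a -> not_nonpos_int (a + 2%:R^-1) ->
  2%:R * w ^+ 2 / a * F32_coef (a + w) (a - w) (a + 2%:R^-1) (a + 1) 1 j
  = 2%:R * (a + j%:R) * F32_coef (a + w) (a - w) (a + 2%:R^-1) a 1 j
    + (2%:R * (a + j%:R) + 1) * F32_coef (a + w) (a - w) (a + 2%:R^-1) a 1 j.+1.
Proof.
move=> a_ok a12_ok; have := F32_coef_lower_succ (a + w) (a - w) 1 j a12_ok a_ok.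
move/(canRL (mulfK (not_nonpos_int_addn j a_ok)))->.
rewrite /F32_coef !poch_recr [(- 1) ^+ j.+1]exprS.
(* [field] states the side condition for [2 (a + 1/2 + j)] in this form. *)
have odd_neq0 : a * 2%:R + 1 + j%:R * 2%:R != 0.
  have -> : a * 2%:R + 1 + j%:R * 2%:R = (a + 2%:R^-1 + j%:R) * 2%:R by field.
  by rewrite mulf_neq0 ?pnatr_eq0 ?not_nonpos_int_addn.
by field; rewrite odd_neq0 !poch_neq0 ?not_nonpos_int_addn ?not_nonpos_int_neq0.
Qed.

End HypergeometricCoefficients.

Section EvenOddInterlacing.
Variables (F : fieldType) (a w : F) (f g h : nat -> F).
Hypothesis a2_ok : not_nonpos_int (2%:R * a).
Hypothesis f_rec : forall m,
  (2%:R * a + m.+1%:R) * f m.+2 = - (2%:R * w) * f m.+1 + m.+1%:R * f m.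
Hypothesis g_rec : forall n,
  (2%:R * (a + n%:R) + 1) * g n.+1 = 2%:R * w ^+ 2 / a * h n + (2 * n).+1%:R * g n.
Hypothesis h_rec : forall n,
  (a + n.+1%:R) * h n.+1 = a * g n.+1 + n.+1%:R * h n.
Hypotheses (f0 : f 0%N = g 0%N) (f1 : f 1%N = - w / a * h 0%N).

Lemma even_odd_interlace n : f (2 * n) = g n /\ f (2 * n).+1 = - w / a * h n.
Proof.
have a_neq0 : a != 0.
  by apply: contraNneq (not_nonpos_int_neq0 a2_ok) => ->; rewrite mulr0.
elim: n => [|n [f_even f_odd]]; first by rewrite muln0.
have f_even_next : f (2 * n.+1) = g n.+1.
  rewrite mulnS; apply: (mulfI (not_nonpos_int_addn (2 * n).+1 a2_ok)).
  rewrite f_rec f_even f_odd.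
  have -> : 2%:R * a + (2 * n).+1%:R = 2%:R * (a + n%:R) + 1 :> F by ring.
  by rewrite g_rec; field.
split=> //; move: f_even_next; rewrite mulnS => f_even_next.
apply: (mulfI (not_nonpos_int_addn (2 * n).+2 a2_ok)).
rewrite f_rec f_even_next f_odd.
have -> : (2%:R * a + (2 * n).+2%:R) * (- w / a * h n.+1)
          = - (2%:R * w) / a * ((a + n.+1%:R) * h n.+1) by field.
by rewrite h_rec; field.
Qed.

End EvenOddInterlacing.

Theorem mainTheorem13 (C : numClosedFieldType) (a : C)
  (h2a : not_nonpos_int (2%:R * a)) (ha : not_nonpos_int a)
  (ha12 : not_nonpos_int (a + 2%:R^-1)) (ha1 : not_nonpos_int (a + 1))
  (n : nat) (x : C) :
  F21_term (2 * n) (a + 'i * x) (2%:R * a) 2%:R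
    = F32_term n (a + 'i * x) (a - 'i * x) (a + 2%:R^-1) a 1
  /\
  F21_term (2 * n).+1 (a + 'i * x) (2%:R * a) 2%:R
    = x / ('i * a) * F32_term n (a + 'i * x) (a - 'i * x) (a + 2%:R^-1) (a + 1) 1.
Proof.
set w := 'i * x.
have -> : x / ('i * a) = - w / a.
  have i2x : x = - ('i ^+ 2 * x) by rewrite sqrCi mulN1r opprK.
  by rewrite /w {1}i2x; field; rewrite neq0Ci not_nonpos_int_neq0.
rewrite !F21_termE // !F32_termE //.
pose f m := binsum m (F21_coef (a + w) (2%:R * a) 2%:R).
pose g m := binsum m (F32_coef (a + w) (a - w) (a + 2%:R^-1) a 1).
pose h m := binsum m (F32_coef (a + w) (a - w) (a + 2%:R^-1) (a + 1) 1).
apply: (even_odd_interlace (f := f) (g := g) (h := h) h2a) => [m | m | m | |];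
  rewrite /f /g /h.
- rewrite (binsum_three_term_rec (fun k => F21_coef_ratio (a + w) 2%:R k h2a)).
  by congr (_ * _ + _); ring.
- exact: binsum_succ_rel_even (fun j => F32_coef_contiguous w j ha ha12) m.
- exact: binsum_succ_rel_odd (fun j => F32_coef_lower_succ _ _ 1 j ha12 ha) m.
- by rewrite !binsum0 /F21_coef /F32_coef !poch0 !expr0 !mulr1 !divr1.
- rewrite binsum1 binsum0 /F21_coef /F32_coef !poch_recr !poch0.
  by field; rewrite not_nonpos_int_neq0.
Qed.
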